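(* For a $T_1$-space $X$ the following are equivalent: (1) $X$ is metrizable; (2) $X$ is a perfect space with a regular base at non-isolated points; (3) $X$ is a perfect space with a strong development at non-isolated points.
   Context: $X$ is perfect if every open subset is an $F_\sigma$-set. $I(X)$ is the set of isolated points, $\mathcal{I}(X)=\{\{x\}:x\in I(X)\}$, $\mathrm{st}(A,\mathcal{W})=\bigcup\{W\in\mathcal{W}:W\cap A\neq\emptyset\}$. A base $\mathcal{B}$ is regular at $x$ if for every neighborhood $U$ of $x$ there is an open $V$ with $x\in V\subset U$ such that $\{B\in\mathcal{B}: B\cap V\neq\emptyset,\ B\not\subset U\}$ is finite; a regular base at non-isolated points is regular at every $x\in X\setminus I(X)$. A sequence $\{\mathcal{W}_i\}$ of open covers with $\mathcal{I}(X)\subset\bigcup_i\mathcal{W}_i$ is a strong development at non-isolated points if for every $x\in X\setminus I(X)$ and neighborhood $U$ of $x$ there are a neighborhood $V$ of $x$ and $i$ with $\mathrm{st}(V,\mathcal{W}_i)\subset U$. *)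

From Stdlib Require Import Reals List.
Open Scope R_scope.

Section Topology.
Variable X : Type.

Definition set := X -> Prop.
Definition subset (A B : set) : Prop := forall x, A x -> B x.

Definition is_topology (T : set -> Prop) : Prop :=
  T (fun _ => True) /\ T (fun _ => False) /\
  (forall U V, T U -> T V -> T (fun x => U x /\ V x)) /\
  (forall F : set -> Prop, (forall U, F U -> T U) ->
     T (fun x => exists U, F U /\ U x)).

Definition T1_space (T : set -> Prop) : Prop :=
  forall x y, x <> y -> exists U, T U /\ U x /\ ~ U y.

Definition closed (T : set -> Prop) (C : set) : Prop := T (fun x => ~ C x).

Definition F_sigma (T : set -> Prop) (A : set) : Prop :=
  exists C : nat -> set, (forall n, closed T (C n)) /\
    (forall x, A x <-> exists n, C n x).

Definition perfect (T : set -> Prop) : Prop :=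
  forall U, T U -> F_sigma T U.

Definition singleton (x : X) : set := fun y => y = x.

Definition isolated (T : set -> Prop) (x : X) : Prop := T (singleton x).

Definition is_base (T : set -> Prop) (B : set -> Prop) : Prop :=
  (forall W, B W -> T W) /\
  (forall U x, T U -> U x -> exists W, B W /\ W x /\ subset W U).

Definition finite_family (F : set -> Prop) : Prop :=
  exists l : list set, forall W, F W -> In W l.

Definition intersects (A B : set) : Prop := exists y, A y /\ B y.

Definition regular_at (T : set -> Prop) (B : set -> Prop) (x : X) : Prop :=
  forall U, T U -> U x ->
    exists V, T V /\ V x /\ subset V U /\
      finite_family (fun W => B W /\ intersects W V /\ ~ subset W U).

Definition regular_base_at_nonisolated (T : set -> Prop) (B : set -> Prop) : Prop :=
  is_base T B /\ forall x, ~ isolated T x -> regular_at T B x.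

Definition star (A : set) (W : set -> Prop) : set :=
  fun y => exists U, W U /\ intersects U A /\ U y.

Definition open_cover (T : set -> Prop) (W : set -> Prop) : Prop :=
  (forall U, W U -> T U) /\ (forall x, exists U, W U /\ U x).

Definition strong_development_at_nonisolated (T : set -> Prop)
    (Ws : nat -> set -> Prop) : Prop :=
  (forall i, open_cover T (Ws i)) /\
  (forall x, isolated T x -> exists i, Ws i (singleton x)) /\
  (forall x, ~ isolated T x -> forall U, T U -> U x ->
     exists V i, T V /\ V x /\ subset (star V (Ws i)) U).

Definition is_metric (d : X -> X -> R) : Prop :=
  (forall x y, d x y = 0 <-> x = y) /\
  (forall x y, d x y = d y x) /\
  (forall x y z, d x z <= d x y + d y z).

Definition metric_open (d : X -> X -> R) (U : set) : Prop :=
  forall x, U x -> exists eps, 0 < eps /\ forall y, d x y < eps -> U y.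

Definition metrizable (T : set -> Prop) : Prop :=
  exists d, is_metric d /\ forall U, T U <-> metric_open d U.

End Topology.

Arguments subset {X}.

From Stdlib Require Import Reals List Lra Lia Classical FunctionalExtensionality
  PropExtensionality IndefiniteDescription.
From mathcomp Require ssreflect ssrbool eqtype boolp wochoice.
Set Bullet Behavior "Strict Subproofs".
Open Scope R_scope.

Lemma half_pow_pos n : 0 < (/2)^n.
Proof. apply pow_lt. lra. Qed.

Lemma half_pow_S n : (/2)^(S n) = (/2)^n / 2.
Proof. simpl. lra. Qed.

Lemma half_pow_small r : 0 < r -> exists n, (/2)^n < r.
Proof.
  intros Hr. destruct (pow_lt_1_zero (/2)) with (y := r) as [N HN]; auto.
  - rewrite Rabs_right; lra.
  - exists N. specialize (HN N (Nat.le_refl N)).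
    rewrite Rabs_right in HN; auto. left; apply half_pow_pos.
Qed.

Lemma half_pow_antitone n m : (n <= m)%nat -> (/2)^m <= (/2)^n.
Proof.
  intros H. induction H; [lra|]. rewrite half_pow_S. pose proof (half_pow_pos m). lra.
Qed.

Lemma half_pow_lt_inv n m : (/2)^n < (/2)^m -> (m < n)%nat.
Proof.
  intros H. destruct (Nat.lt_ge_cases m n) as [|Hc]; auto.
  apply half_pow_antitone in Hc. lra.
Qed.

Lemma set_ext {X : Type} (A B : set X) : (forall y, A y <-> B y) -> A = B.
Proof.
  intros H. apply functional_extensionality. intros y.
  apply propositional_extensionality. apply H.
Qed.

Section TopologyFacts.
Variable X : Type.
Variable T : set X -> Prop.
Hypothesis HT : is_topology X T.

Lemma open_ext (A B : set X) : T A -> (forall y, A y <-> B y) -> T B.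
Proof. intros HA H. rewrite <- (set_ext A B H). exact HA. Qed.

Lemma open_full : T (fun _ => True).
Proof. apply HT. Qed.

Lemma open_inter U V : T U -> T V -> T (fun x => U x /\ V x).
Proof. apply HT. Qed.

Lemma open_of_local (U : set X) :
  (forall x, U x -> exists W, T W /\ W x /\ subset W U) -> T U.
Proof.
  intros H. destruct HT as [_ [_ [_ Hunion]]].
  apply open_ext with (A := fun x => exists W, (T W /\ subset W U) /\ W x).
  - apply Hunion. intros W [HW _]. exact HW.
  - intros y. split.
    + intros [W [[_ HWU] Wy]]. auto.
    + intros Uy. destruct (H y Uy) as [W [HW [Wy HWU]]]. exists W. auto.
Qed.

Lemma open_finite_inter (K : nat) (A : nat -> set X) :
  (forall j, (j <= K)%nat -> T (A j)) ->
  T (fun y => forall j, (j <= K)%nat -> A j y).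
Proof.
  induction K; intros H.
  - apply open_ext with (A 0%nat); [apply H; lia|].
    intros y; split.
    + intros Hy j Hj. replace j with 0%nat by lia. exact Hy.
    + intros Hy. apply Hy; lia.
  - apply open_ext with (fun y => (forall j, (j <= K)%nat -> A j y) /\ A (S K) y).
    + apply open_inter; [apply IHK; intros; apply H; lia | apply H; lia].
    + intros y; split.
      * intros [H1 H2] j Hj. destruct (Nat.eq_dec j (S K)); [subst; auto | apply H1; lia].
      * intros Hy. split; [intros; apply Hy; lia | apply Hy; lia].
Qed.

Lemma open_isolated : T (isolated X T).
Proof.
  apply open_of_local. intros x Ix. exists (singleton X x).
  split; [exact Ix|]. split; [reflexivity|]. intros y Hy. unfold singleton in Hy. subst. exact Ix.
Qed.

Lemma other_point W z : T W -> W z -> ~ isolated X T z -> exists y, W y /\ y <> z.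
Proof.
  intros HW Wz Nz. apply NNPP. intros Hn. apply Nz. unfold isolated.
  apply open_ext with W; auto. intros y. unfold singleton. split.
  - intros Wy. apply NNPP. intros Hne. apply Hn. exists y. auto.
  - intros ->; exact Wz.
Qed.

End TopologyFacts.

(** * Frink's chain construction: a metric from a graded family of relations

    [Ent n] is thought of as "being 2^-n-close". *)

Section ChainMetric.
Variable X : Type.
Variable Ent : nat -> X -> X -> Prop.
Hypothesis Ent_full : forall x y, Ent 0 x y.
Hypothesis Ent_refl : forall n x, Ent n x x.
Hypothesis Ent_sym : forall n x y, Ent n x y -> Ent n y x.
Hypothesis Ent_succ : forall n x y, Ent (S n) x y -> Ent n x y.
Hypothesis Ent_triple : forall n x y z w,
  Ent (S n) x y -> Ent (S n) y z -> Ent (S n) z w -> Ent n x w.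

Lemma Ent_antitone n m x y : (n <= m)%nat -> Ent m x y -> Ent n x y.
Proof. intros H. induction H; auto. Qed.

Fixpoint is_chain (x : X) (l : list (nat * X)) (y : X) : Prop :=
  match l with
  | nil => x = y
  | (n, z) :: l' => Ent n x z /\ is_chain z l' y
  end.

Fixpoint chain_length (l : list (nat * X)) : R :=
  match l with
  | nil => 0
  | (n, _) :: l' => (/2)^n + chain_length l'
  end.

Lemma chain_length_nonneg l : 0 <= chain_length l.
Proof.
  induction l as [|[n z] l IH]; simpl; [lra|]. pose proof (half_pow_pos n). lra.
Qed.

Lemma chain_length_app l1 l2 : chain_length (l1 ++ l2) = chain_length l1 + chain_length l2.
Proof. induction l1 as [|[n z] l IH]; simpl; [lra|]. rewrite IH. lra. Qed.

Lemma is_chain_app x l1 y l2 z :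
  is_chain x l1 y -> is_chain y l2 z -> is_chain x (l1 ++ l2) z.
Proof.
  revert x; induction l1 as [|[n w] l IH]; simpl; intros x H1 H2.
  - subst; exact H2.
  - destruct H1; split; eauto.
Qed.

Lemma is_chain_split x l1 n z l2 y : is_chain x (l1 ++ (n, z) :: l2) y ->
  exists w, is_chain x l1 w /\ Ent n w z /\ is_chain z l2 y.
Proof.
  revert x; induction l1 as [|[k v] l IH]; simpl; intros x H.
  - exists x. tauto.
  - destruct H as [H1 H2]. destruct (IH _ H2) as [w [A [B C]]]. exists w. auto.
Qed.

Fixpoint rev_chain (x : X) (l : list (nat * X)) : list (nat * X) :=
  match l with
  | nil => nil
  | (n, z) :: l' => rev_chain z l' ++ (n, x) :: nil
  end.

Lemma is_chain_rev x l y : is_chain x l y -> is_chain y (rev_chain x l) x.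
Proof.
  revert x; induction l as [|[n z] l IH]; simpl; intros x H; [auto|].
  destruct H as [H1 H2]. apply is_chain_app with z; auto. simpl. auto.
Qed.

Lemma chain_length_rev x l : chain_length (rev_chain x l) = chain_length l.
Proof.
  revert x; induction l as [|[n z] l IH]; simpl; intros x; [reflexivity|].
  rewrite chain_length_app, IH. simpl. lra.
Qed.

Lemma chain_cut l p h : p <= h -> h < p + chain_length l ->
  exists l1 n z l2, l = l1 ++ (n, z) :: l2 /\
    p + chain_length l1 <= h /\ h < p + chain_length l1 + (/2)^n.
Proof.
  revert p; induction l as [|[n z] l IH]; simpl; intros p H1 H2; [lra|].
  destruct (Rlt_or_le h (p + (/2)^n)).
  - exists nil, n, z, l. simpl. split; [reflexivity | lra].
  - destruct (IH (p + (/2)^n)) as [l1 [k [w [l2 [Heq [A B]]]]]]; try lra.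
    exists ((n, z) :: l1), k, w, l2. simpl. rewrite Heq. split; [reflexivity | lra].
Qed.

(* Cutting a chain at half its length: both halves are shorter than
   2^-(m+1), and the middle step is at level >= m+1; induct on the number of steps. *)
Lemma chain_small_ent_aux N : forall l x y, (length l <= N)%nat -> is_chain x l y ->
  forall m, chain_length l < (/2)^m -> Ent m x y.
Proof.
  induction N; intros l x y Hlen Hc m Hsmall.
  - destruct l; simpl in Hlen; try lia. simpl in Hc. subst. apply Ent_refl.
  - destruct l as [|[n0 z0] l0]; [simpl in Hc; subst; apply Ent_refl|].
    set (L := chain_length ((n0, z0) :: l0)) in *.
    assert (HL : 0 < L).
    { unfold L; simpl. pose proof (half_pow_pos n0). pose proof (chain_length_nonneg l0). lra. }
    destruct (chain_cut ((n0, z0) :: l0) 0 (L / 2)) as [l1 [n [z [l2 [Heq [A B]]]]]];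
      try (fold L; lra).
    assert (HLsplit : L = chain_length l1 + (/2)^n + chain_length l2).
    { unfold L. rewrite Heq, chain_length_app. simpl. lra. }
    assert (Hlen_split : length ((n0, z0) :: l0) = (length l1 + S (length l2))%nat).
    { rewrite Heq, length_app. simpl. lia. }
    rewrite Heq in Hc. apply is_chain_split in Hc. destruct Hc as [w [C1 [Ew C2]]].
    pose proof (half_pow_S m) as Hhalf.
    pose proof (chain_length_nonneg l1). pose proof (chain_length_nonneg l2).
    apply Ent_triple with w z.
    + apply IHN with l1; [lia | exact C1 | lra].
    + apply Ent_antitone with n; auto. apply half_pow_lt_inv. lra.
    + apply IHN with l2; [lia | exact C2 | lra].
Qed.

Lemma chain_small_ent l x y m :
  is_chain x l y -> chain_length l < (/2)^m -> Ent m x y.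
Proof. intros. apply chain_small_ent_aux with (length l) l; auto. Qed.

Definition neg_chain_lengths (x y : X) : R -> Prop :=
  fun r => exists l, is_chain x l y /\ r = - chain_length l.

Lemma neg_chain_lengths_bound x y : bound (neg_chain_lengths x y).
Proof.
  exists 0. intros r [l [_ ->]]. pose proof (chain_length_nonneg l). lra.
Qed.

Lemma neg_chain_lengths_inhabited x y : exists r, neg_chain_lengths x y r.
Proof. exists (- chain_length ((0%nat, y) :: nil)). exists ((0%nat, y) :: nil). simpl. auto. Qed.

Definition chain_dist (x y : X) : R :=
  - proj1_sig (completeness _ (neg_chain_lengths_bound x y) (neg_chain_lengths_inhabited x y)).

Lemma chain_dist_le x y l : is_chain x l y -> chain_dist x y <= chain_length l.
Proof.
  intros H. unfold chain_dist.
  destruct (completeness _ (neg_chain_lengths_bound x y) (neg_chain_lengths_inhabited x y))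
    as [m Hm]; simpl. destruct Hm as [Hub _].
  assert (- chain_length l <= m) by (apply Hub; exists l; auto). lra.
Qed.

Lemma chain_dist_approx x y eps : 0 < eps ->
  exists l, is_chain x l y /\ chain_length l < chain_dist x y + eps.
Proof.
  intros He. unfold chain_dist.
  destruct (completeness _ (neg_chain_lengths_bound x y) (neg_chain_lengths_inhabited x y))
    as [m Hm]; simpl. destruct Hm as [_ Hlub].
  apply NNPP. intros H. assert (m <= m - eps); [|lra].
  apply Hlub. intros r [l [Hl ->]].
  apply Rnot_lt_le. intros Hlt. apply H. exists l. split; auto. lra.
Qed.

Lemma chain_dist_nonneg x y : 0 <= chain_dist x y.
Proof.
  apply Rnot_lt_le. intros Hlt.
  destruct (chain_dist_approx x y (- chain_dist x y)) as [l [_ Hl]]; [lra|].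
  pose proof (chain_length_nonneg l). lra.
Qed.

Lemma chain_dist_sym_le x y : chain_dist y x <= chain_dist x y.
Proof.
  apply le_epsilon. intros eps He. destruct (chain_dist_approx x y eps He) as [l [Hl Hc]].
  pose proof (chain_dist_le _ _ _ (is_chain_rev _ _ _ Hl)). rewrite chain_length_rev in H. lra.
Qed.

Lemma chain_dist_triangle x y z : chain_dist x z <= chain_dist x y + chain_dist y z.
Proof.
  apply le_epsilon. intros eps He.
  destruct (chain_dist_approx x y (eps/2)) as [l1 [H1 C1]]; [lra|].
  destruct (chain_dist_approx y z (eps/2)) as [l2 [H2 C2]]; [lra|].
  pose proof (chain_dist_le _ _ _ (is_chain_app _ _ _ _ _ H1 H2)).
  rewrite chain_length_app in H. lra.
Qed.

Lemma chain_dist_of_ent n x y : Ent n x y -> chain_dist x y <= (/2)^n.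
Proof.
  intros H. assert (Hle : chain_dist x y <= chain_length ((n, y) :: nil))
    by (apply chain_dist_le; simpl; auto).
  simpl in Hle. lra.
Qed.

Lemma ent_of_chain_dist n x y : chain_dist x y < (/2)^n -> Ent n x y.
Proof.
  intros H. destruct (chain_dist_approx x y ((/2)^n - chain_dist x y)) as [l [Hl Hc]]; [lra|].
  apply chain_small_ent with l; auto. lra.
Qed.

Hypothesis Ent_separated : forall x y, (forall n, Ent n x y) -> x = y.

Lemma chain_dist_metric : is_metric X chain_dist.
Proof.
  split; [|split].
  - intros x y; split.
    + intros H. apply Ent_separated. intros n. apply ent_of_chain_dist.
      rewrite H. apply half_pow_pos.
    + intros ->. pose proof (chain_dist_le y y nil eq_refl). simpl in H.
      pose proof (chain_dist_nonneg y y). lra.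
  - intros x y. pose proof (chain_dist_sym_le x y). pose proof (chain_dist_sym_le y x). lra.
  - apply chain_dist_triangle.
Qed.

End ChainMetric.

(** * Metrizability from a graded neighbourhood system *)

Section MetrizeFromEnt.
Variable X : Type.
Variable T : set X -> Prop.
Hypothesis HT : is_topology X T.
Hypothesis HT1 : T1_space X T.
Variable Ent : nat -> X -> X -> Prop.
Hypothesis Ent_full : forall x y, Ent 0 x y.
Hypothesis Ent_refl : forall n x, Ent n x x.
Hypothesis Ent_sym : forall n x y, Ent n x y -> Ent n y x.
Hypothesis Ent_succ : forall n x y, Ent (S n) x y -> Ent n x y.
Hypothesis Ent_triple : forall n x y z w,
  Ent (S n) x y -> Ent (S n) y z -> Ent (S n) z w -> Ent n x w.
Hypothesis Ent_base : forall x U, T U -> U x -> exists n, forall y, Ent n x y -> U y.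
Hypothesis Ent_nbhd : forall n x, exists W, T W /\ W x /\ forall y, W y -> Ent n x y.

Lemma metrizable_of_ent : metrizable X T.
Proof.
  (* In a T1 space, a neighbourhood base separates points. *)
  assert (Ent_separated : forall x y, (forall n, Ent n x y) -> x = y).
  { intros x y H. apply NNPP. intros Hne. destruct (HT1 x y Hne) as [U [HU [Ux Uy]]].
    destruct (Ent_base x U HU Ux) as [n Hn]. apply Uy, Hn, H. }
  exists (chain_dist X Ent Ent_full). split; [apply chain_dist_metric; auto|].
  intros U; split.
  - intros HU x Ux. destruct (Ent_base x U HU Ux) as [n Hn].
    exists ((/2)^n). split; [apply half_pow_pos|].
    intros y Hy. apply Hn. apply ent_of_chain_dist with Ent_full; auto.
  - intros HU. apply open_of_local; auto. intros x Ux.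
    destruct (HU x Ux) as [eps [He Hball]]. destruct (half_pow_small eps He) as [n Hn].
    destruct (Ent_nbhd n x) as [W [HW [Wx HWent]]].
    exists W. split; [exact HW|]. split; [exact Wx|]. intros y Wy. apply Hball.
    pose proof (chain_dist_of_ent X Ent Ent_full n x y (HWent y Wy)). lra.
Qed.

End MetrizeFromEnt.

(** * (3) => (1): from a strong development at non-isolated points

    Perfectness writes the open set of isolated points as a union of closed
    sets [C k]. *)

Section StrongDevelopment.
Variable X : Type.
Variable T : set X -> Prop.
Hypothesis HT : is_topology X T.
Hypothesis HT1 : T1_space X T.
Variable Ws : nat -> set X -> Prop.
Hypothesis Ws_cover : forall i, open_cover X T (Ws i).
Variable cover_at : nat -> X -> set X.
Hypothesis cover_at_spec : forall j x, Ws j (cover_at j x) /\ cover_at j x x.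
Variable star_nbhd : X -> set X -> set X.
Variable star_level : X -> set X -> nat.
Hypothesis star_spec : forall x U, ~ isolated X T x -> T U -> U x ->
  T (star_nbhd x U) /\ star_nbhd x U x /\
  subset (star X (star_nbhd x U) (Ws (star_level x U))) U.
Variable C : nat -> set X.
Hypothesis C_closed : forall n, closed X T (C n).
Hypothesis C_isolated : forall y, isolated X T y <-> exists n, C n y.

Definition refine (n : nat) (x : X) (U : set X) : set X :=
  fun y => star_nbhd x U y /\ U y /\
    (forall j, (j <= max n (star_level x U))%nat -> cover_at j x y) /\
    (forall k, (k <= S n)%nat -> ~ C k y).

Fixpoint nbhd (n : nat) (x : X) : set X :=
  match n with
  | 0 => fun _ => True
  | S n => fun y => (isolated X T x /\ y = x) \/
                    (~ isolated X T x /\ refine n x (nbhd n x) y)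
  end.

Lemma refine_open n x U : ~ isolated X T x -> T U -> U x ->
  T (refine n x U) /\ refine n x U x.
Proof.
  intros Nx HU Ux. destruct (star_spec x U Nx HU Ux) as [HV [Vx _]]. split.
  - unfold refine.
    apply (open_inter X T HT); [exact HV|]. apply (open_inter X T HT); [exact HU|].
    apply (open_inter X T HT).
    + apply open_finite_inter; auto. intros j _. apply (Ws_cover j), cover_at_spec.
    + apply open_finite_inter with (A := fun k y => ~ C k y); auto.
      intros k _. apply C_closed.
  - repeat split; auto.
    + intros j _. apply cover_at_spec.
    + intros k _ Ck. apply Nx, C_isolated. eauto.
Qed.

Lemma nbhd_open n x : T (nbhd n x) /\ nbhd n x x.
Proof.
  revert x; induction n; intros x; simpl; [split; [apply open_full; auto | exact I]|].
  destruct (IHn x) as [Ho Hx]. destruct (classic (isolated X T x)) as [Ix|Nx].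
  - split; [|left; auto]. apply open_ext with (singleton X x); auto.
    intros y; unfold singleton; tauto.
  - destruct (refine_open n x (nbhd n x) Nx Ho Hx) as [Hro Hrx]. split; [|right; auto].
    apply open_ext with (refine n x (nbhd n x)); auto. intros y; tauto.
Qed.

Lemma nbhd_succ_isolated n x y : isolated X T x -> nbhd (S n) x y -> y = x.
Proof. simpl. intros Ix [[_ ->] | [Nx _]]; [reflexivity | contradiction]. Qed.

Lemma nbhd_succ_nonisolated n x y : ~ isolated X T x -> nbhd (S n) x y ->
  refine n x (nbhd n x) y.
Proof. simpl. intros Nx [[Ix _] | [_ H]]; [contradiction | exact H]. Qed.

Lemma nbhd_succ_sub n x y : nbhd (S n) x y -> nbhd n x y.
Proof.
  simpl. intros [[_ ->] | [_ [_ [H _]]]]; [apply nbhd_open | exact H].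
Qed.

(* Key star property: if the level-[S n] neighbourhoods of two non-isolated
   points meet, the one with the larger star level lies inside the level-[n]
   neighbourhood of the other, thanks to the star refinement of the latter. *)
Lemma nbhd_star_ordered n a b y0 : ~ isolated X T a -> ~ isolated X T b ->
  nbhd (S n) a y0 -> nbhd (S n) b y0 ->
  (star_level a (nbhd n a) <= star_level b (nbhd n b))%nat ->
  subset (nbhd (S n) b) (nbhd n a).
Proof.
  intros Na Nb Ha Hb Hle y Hy.
  destruct (nbhd_open n a) as [Ho Hx].
  destruct (star_spec a (nbhd n a) Na Ho Hx) as [_ [_ Hstar]].
  apply Hstar. exists (cover_at (star_level a (nbhd n a)) b). split; [apply cover_at_spec|].
  destruct (nbhd_succ_nonisolated n a y0 Na Ha) as [Va _].
  destruct (nbhd_succ_nonisolated n b y0 Nb Hb) as [_ [_ [Wb0 _]]].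
  destruct (nbhd_succ_nonisolated n b y Nb Hy) as [_ [_ [Wby _]]].
  split; [exists y0; split; [apply Wb0; lia | exact Va] | apply Wby; lia].
Qed.

Lemma nbhd_star n a b y0 : nbhd (S n) a y0 -> nbhd (S n) b y0 ->
  exists c, subset (nbhd (S n) a) (nbhd n c) /\ subset (nbhd (S n) b) (nbhd n c).
Proof.
  intros Ha Hb.
  destruct (classic (isolated X T a)) as [Ia|Na].
  { (* an isolated [a] has [nbhd (S n) a = {a}], so [a = y0] *)
    exists b. split; [|intros y; apply nbhd_succ_sub].
    intros y Hy. rewrite (nbhd_succ_isolated n a y Ia Hy).
    rewrite <- (nbhd_succ_isolated n a y0 Ia Ha). apply nbhd_succ_sub; exact Hb. }
  destruct (classic (isolated X T b)) as [Ib|Nb].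
  { exists a. split; [intros y; apply nbhd_succ_sub|].
    intros y Hy. rewrite (nbhd_succ_isolated n b y Ib Hy).
    rewrite <- (nbhd_succ_isolated n b y0 Ib Hb). apply nbhd_succ_sub; exact Ha. }
  destruct (Nat.le_ge_cases (star_level a (nbhd n a)) (star_level b (nbhd n b))) as [Hle|Hle].
  - exists a. split; [intros y; apply nbhd_succ_sub|].
    apply (nbhd_star_ordered n a b y0); auto.
  - exists b. split; [|intros y; apply nbhd_succ_sub].
    apply (nbhd_star_ordered n b a y0); auto.
Qed.

Definition near (k : nat) (x y : X) : Prop := exists z, nbhd k z x /\ nbhd k z y.

Lemma near_succ k x y : near (S k) x y -> near k x y.
Proof. intros [z [A B]]. exists z. split; apply nbhd_succ_sub; auto. Qed.

Lemma near_antitone k m x y : (k <= m)%nat -> near m x y -> near k x y.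
Proof. intros H. induction H; auto. intros; apply IHle, near_succ; auto. Qed.

Lemma near_compose k x y w : near (S k) x y -> near (S k) y w -> near k x w.
Proof.
  intros [a [A1 A2]] [b [B1 B2]]. destruct (nbhd_star k a b y A2 B1) as [c [H1 H2]].
  exists c. auto.
Qed.

(* The [near k x] form a neighbourhood base at [x]: at an isolated point
   because [C k] misses the neighbourhoods of non-isolated points from level
   [S k] on, at a non-isolated point by the strong development property. *)
Lemma near_base x U : T U -> U x -> exists k, forall y, near k x y -> U y.
Proof.
  intros HU Ux. destruct (classic (isolated X T x)) as [Ix|Nx].
  - destruct (proj1 (C_isolated x) Ix) as [k Ck]. exists (S k). intros y [z [Hzx Hzy]].
    destruct (classic (isolated X T z)) as [Iz|Nz].
    + rewrite (nbhd_succ_isolated k z y Iz Hzy), <- (nbhd_succ_isolated k z x Iz Hzx). exact Ux.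
    + destruct (nbhd_succ_nonisolated k z x Nz Hzx) as [_ [_ [_ HnC]]].
      exfalso. apply (HnC k); auto.
  - destruct (star_spec x U Nx HU Ux) as [_ [Vx Hstar]].
    set (i := star_level x U) in *.
    exists (S i). intros y [z [Hzx Hzy]].
    destruct (classic (isolated X T z)) as [Iz|Nz].
    + apply (nbhd_succ_isolated i z x Iz) in Hzx. subst z. apply Nx in Iz. contradiction.
    + destruct (nbhd_succ_nonisolated i z x Nz Hzx) as [_ [_ [Wx _]]].
      destruct (nbhd_succ_nonisolated i z y Nz Hzy) as [_ [_ [Wy _]]].
      apply Hstar. exists (cover_at i z). split; [apply cover_at_spec|].
      split; [exists x; split; [apply Wx; lia | exact Vx] | apply Wy; lia].
Qed.

Lemma metrizable_of_development : metrizable X T.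
Proof.
  apply metrizable_of_ent with (Ent := fun n => near (2 * n)); auto.
  - intros x y. exists x. simpl. auto.
  - intros n x. exists x. split; apply nbhd_open.
  - intros n x y [z [A B]]. exists z. auto.
  - intros n x y H. apply near_antitone with (2 * S n)%nat; [lia | exact H].
  - intros n x y z w H1 H2 H3. replace (2 * S n)%nat with (S (S (2 * n))) in * by lia.
    apply near_compose with z; [apply near_compose with y; auto | apply near_succ; auto].
  - intros x U HU Ux. destruct (near_base x U HU Ux) as [k Hk]. exists k. intros y Hy.
    apply Hk. apply near_antitone with (2 * k)%nat; [lia | exact Hy].
  - intros n x. exists (nbhd (2 * n) x). split; [apply nbhd_open|]. split; [apply nbhd_open|].
    intros y Hy. exists x. split; [apply nbhd_open | exact Hy].
Qed.

End StrongDevelopment.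

Lemma metrizable_of_strong_development (X : Type) (T : set X -> Prop)
  (HT : is_topology X T) (HT1 : T1_space X T) :
  perfect X T -> (exists Ws, strong_development_at_nonisolated X T Ws) -> metrizable X T.
Proof.
  intros Hperf [Ws [Ws_cover [_ Hstrong]]].
  destruct (functional_choice (fun (p : nat * X) U => Ws (fst p) U /\ U (snd p)))
    as [cover_at Hcover_at].
  { intros [j x]. apply (Ws_cover j). }
  destruct (functional_choice (fun (p : X * set X) (q : set X * nat) =>
     ~ isolated X T (fst p) -> T (snd p) -> snd p (fst p) ->
     T (fst q) /\ fst q (fst p) /\ subset (star X (fst q) (Ws (snd q))) (snd p)))
    as [star_data Hstar_data].
  { intros [x U]. simpl. destruct (classic (~ isolated X T x /\ T U /\ U x)) as [[A [B C]]|Hn].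
    - destruct (Hstrong x A U B C) as [V [i H]]. exists (V, i). auto.
    - exists ((fun _ => True), 0%nat). intros; exfalso; tauto. }
  destruct (Hperf _ (open_isolated X T HT)) as [C [HC HCI]].
  apply metrizable_of_development with Ws (fun j x => cover_at (j, x))
    (fun x U => fst (star_data (x, U))) (fun x U => snd (star_data (x, U))) C;
    [exact HT | exact HT1 | exact Ws_cover | | | exact HC | exact HCI].
  - intros j x. apply (Hcover_at (j, x)).
  - intros x U Nx HU Ux. apply (Hstar_data (x, U)); auto.
Qed.

(** * (2) => (3): from a regular base at non-isolated points

    Call a base element [W] deep at level [n] if it is the last term of a
    strictly decreasing chain [W_0 ⊋ W_1 ⊋ ... ⊋ W_n = W] of base elements.
    Regularity at a non-isolated point [z ∈ W] bounds the depth of [W]: all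
    members of such a chain meet a small neighbourhood of [z] without lying in
    a neighbourhood of [z] that omits some other point of [W], so they belong
    to a fixed finite family. *)

Section RegularBase.
Variable X : Type.
Variable T : set X -> Prop.
Hypothesis HT : is_topology X T.
Hypothesis HT1 : T1_space X T.
Variable B : set X -> Prop.
Hypothesis HB : regular_base_at_nonisolated X T B.

Inductive deep : nat -> set X -> Prop :=
| deep0 W : B W -> deep 0 W
| deepS n W W' : deep n W' -> B W -> subset W W' -> ~ subset W' W -> deep (S n) W.

Lemma deep_base n W : deep n W -> B W.
Proof. intros H; destruct H; auto. Qed.

Lemma deep_supersets n W : deep n W -> exists l, length l = S n /\ NoDup l /\
  forall A, In A l -> B A /\ subset W A.
Proof.
  intros H; induction H.
  - exists (W :: nil). split; [reflexivity|]. split; [repeat constructor; auto|].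
    intros A [<-|[]]. split; [auto | intros y; auto].
  - destruct IHdeep as [l [Hl [Hnd Hall]]]. exists (W :: l). simpl. split; [auto|]. split.
    + constructor; auto. intros Hin. apply H2. apply Hall. exact Hin.
    + intros A [<-|HA]; [split; [auto | intros y; auto]|].
      destruct (Hall A HA) as [BA W'A]. split; [exact BA | intros y Hy; auto].
Qed.

Lemma deep_pred n W : deep (S n) W -> deep n W.
Proof.
  revert W; induction n; intros W H; inversion H; subst.
  - constructor; auto.
  - apply deepS with W'; auto.
Qed.

Lemma deep_antitone m n W : (m <= n)%nat -> deep n W -> deep m W.
Proof. intros H; induction H; auto. intros; apply IHle, deep_pred; auto. Qed.

Lemma deep_bounded W z : B W -> W z -> ~ isolated X T z -> exists b, ~ deep b W.
Proof.
  intros BW Wz Nz. destruct HB as [[B_open _] Hreg].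
  destruct (other_point X T W z (B_open W BW) Wz Nz) as [y [Wy Hyz]].
  destruct (HT1 z y (not_eq_sym Hyz)) as [U [HU [Uz Uy]]].
  destruct (Hreg z Nz U HU Uz) as [V [HV [Vz [VU [L HL]]]]].
  exists (length L). intros Hd. apply deep_supersets in Hd. destruct Hd as [l [Hl [Hnd Hall]]].
  assert (Hincl : incl l L).
  { intros A HA. destruct (Hall A HA) as [BA WA]. apply HL. split; [exact BA|]. split.
    - exists z. auto.
    - intros Hs. apply Uy, Hs, WA, Wy. }
  pose proof (NoDup_incl_length Hnd Hincl). lia.
Qed.

Lemma deep_exists i z : ~ isolated X T z -> exists W, deep i W /\ W z.
Proof.
  intros Nz. destruct HB as [[B_open B_base] _]. induction i.
  - destruct (B_base (fun _ => True) z (open_full X T HT) I) as [W [BW [Wz _]]].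
    exists W. split; [constructor; auto | exact Wz].
  - destruct IHi as [W [Hd Wz]].
    pose proof (B_open W (deep_base _ _ Hd)) as HW.
    destruct (other_point X T W z HW Wz Nz) as [y [Wy Hyz]].
    destruct (HT1 z y (not_eq_sym Hyz)) as [O [HO [Oz Oy]]].
    destruct (B_base (fun x => W x /\ O x) z (open_inter X T HT _ _ HW HO) (conj Wz Oz))
      as [W' [BW' [W'z HW'sub]]].
    exists W'. split; [|exact W'z]. apply deepS with W; auto.
    + intros p Hp. apply HW'sub; auto.
    + intros Hs. apply Oy, HW'sub, Hs, Wy.
Qed.

Definition deep_cover (i : nat) (A : set X) : Prop :=
  (exists x, isolated X T x /\ A = singleton X x) \/
  (deep i A /\ exists z, ~ isolated X T z /\ A z).

Lemma deep_bounded_list (F : list (set X)) : exists i, forall A, In A F ->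
  (exists z, ~ isolated X T z /\ A z) -> ~ deep i A.
Proof.
  induction F as [|a F IH]; [exists 0%nat; intros A []|].
  destruct IH as [i0 Hi0].
  destruct (classic (B a /\ exists z, ~ isolated X T z /\ a z)) as [[Ba [z [Nz az]]]|Hn].
  - destruct (deep_bounded a z Ba az Nz) as [b Hb]. exists (max i0 b).
    intros A [<-|HA] Hm Hd.
    + apply Hb. apply deep_antitone with (max i0 b); auto; lia.
    + apply (Hi0 A HA Hm). apply deep_antitone with (max i0 b); auto; lia.
  - exists i0. intros A [<-|HA] Hm Hd.
    + apply Hn. split; [apply deep_base with i0; auto | exact Hm].
    + apply (Hi0 A HA Hm Hd).
Qed.

Lemma strong_development_of_regular_base :
  exists Ws, strong_development_at_nonisolated X T Ws.
Proof.
  pose proof HB as [[B_open _] Hreg].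
  exists deep_cover. split; [|split].
  - intros i. split.
    + intros A [[x [Ix ->]]|[Hd _]]; [exact Ix | apply B_open, deep_base with i; auto].
    + intros x. destruct (classic (isolated X T x)) as [Ix|Nx].
      * exists (singleton X x). split; [left; exists x; auto | reflexivity].
      * destruct (deep_exists i x Nx) as [W [Hd Wx]]. exists W.
        split; [right; split; eauto | exact Wx].
  - intros x Ix. exists 0%nat. left. exists x. auto.
  - intros x Nx U HU Ux. destruct (Hreg x Nx U HU Ux) as [V [HV [Vx [VU [F HF]]]]].
    destruct (deep_bounded_list F) as [i Hi]. exists V, i. split; [exact HV|]. split; [exact Vx|].
    intros y [A [HA [Hmeet Ay]]]. destruct HA as [[x' [Ix' ->]]|[Hd Hnoniso]].
    + destruct Hmeet as [p [Hp Vp]]. unfold singleton in Hp, Ay. subst. auto.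
    + apply NNPP. intros Uy. apply (Hi A); auto. apply HF.
      split; [apply deep_base with i; auto|]. split; [exact Hmeet|].
      intros Hs. apply Uy, Hs, Ay.
Qed.

End RegularBase.

Module WellOrdering.
Import ssreflect ssrbool eqtype boolp wochoice.
Lemma exists_well_ordering (X : Type) : exists R : X -> X -> Prop,
  (forall a b, R a b -> R b a -> a = b) /\
  (forall P : X -> Prop, (exists x, P x) -> exists m, P m /\ forall y, P y -> R m y).
Proof.
case: (well_ordering_principle {classic X}) => R HR.
exists (fun a b => R a b); split.
- move=> a b Hab Hba.
  have HC : wo_chain R (@predT {classic X}) by move=> A _; apply: HR.
  have := @wo_chain_antisymmetric _ R _ HC a b isT isT.
  by rewrite Hab Hba; apply.
- move=> P [x Px].
  have [z [[Hz Hlb] _]] := HR (fun y => `[< P y >]) (ex_intro _ x (asboolT Px)).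
  exists z; split; first by move: Hz => /asboolP.
  by move=> y Py; apply: Hlb; apply/asboolP.
Qed.
End WellOrdering.

Section MetricSpace.
Variable X : Type.
Variable d : X -> X -> R.
Hypothesis Hd : is_metric X d.

Lemma dist_refl x : d x x = 0.
Proof. apply Hd. reflexivity. Qed.

Lemma dist_sym x y : d x y = d y x.
Proof. apply Hd. Qed.

Lemma dist_triangle x y z : d x z <= d x y + d y z.
Proof. apply Hd. Qed.

Lemma ball_open c r : metric_open X d (fun y => d c y < r).
Proof.
  intros x Hx. exists (r - d c x). split; [lra|]. intros y Hy.
  pose proof (dist_triangle c x y). lra.
Qed.

Variable T : set X -> Prop.
Hypothesis HTd : forall U, T U <-> metric_open X d U.

Lemma metric_perfect : perfect X T.
Proof.
  intros U HU. apply HTd in HU.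
  exists (fun n x => forall y, ~ U y -> (/2)^n <= d x y). split.
  - intros n. apply HTd. intros x Hx. apply not_all_ex_not in Hx. destruct Hx as [y Hy].
    apply imply_to_and in Hy. destruct Hy as [Uy Hy]. apply Rnot_le_lt in Hy.
    exists ((/2)^n - d x y). split; [lra|]. intros z Hz Hfar. specialize (Hfar y Uy).
    pose proof (dist_triangle z x y). rewrite (dist_sym z x) in H. lra.
  - intros x. split.
    + intros Ux. destruct (HU x Ux) as [eps [He Hball]].
      destruct (half_pow_small eps He) as [n Hn].
      exists n. intros y Uy. apply Rnot_lt_le. intros Hc. apply Uy, Hball. lra.
    + intros [n Hn]. apply NNPP. intros Ux. specialize (Hn x Ux). rewrite dist_refl in Hn.
      pose proof (half_pow_pos n). lra.
Qed.

(** ** A locally finite refinement of the cover by [eps]-balls (Stone, after Rudin)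

    With a well-ordering [prec] of [X], level [n] consists of the sets
    [D n t = ⋃ B(z, r n)], [r n = eps/4 * 2^-n], over the "centres" [z] not
    covered by earlier levels, whose [prec]-least [eps]-close point is [t] and
    with [B(z, 3 r n) ⊆ B(t, eps)].  Distinct sets of one level are
    [r n]-apart, and a small ball meets only finitely many levels. *)

Variable prec : X -> X -> Prop.
Hypothesis prec_antisym : forall a b, prec a b -> prec b a -> a = b.
Hypothesis prec_least : forall P : X -> Prop, (exists x, P x) ->
  exists m, P m /\ forall y, P y -> prec m y.

Section Refinement.
Variable eps : R.
Hypothesis Heps : 0 < eps.

Definition radius (i : nat) : R := eps / 4 * (/2)^i.

Lemma radius_pos i : 0 < radius i.
Proof. unfold radius. pose proof (half_pow_pos i). apply Rmult_lt_0_compat; lra. Qed.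

Lemma radius_antitone i j : (i <= j)%nat -> radius j <= radius i.
Proof.
  intros H. unfold radius. apply Rmult_le_compat_l; [lra | apply half_pow_antitone; auto].
Qed.

Lemma radius_half i j : (i < j)%nat -> 2 * radius j <= radius i.
Proof.
  intros H. unfold radius. pose proof (half_pow_antitone (S i) j H). rewrite half_pow_S in H0.
  nra.
Qed.

Lemma radius_small r : 0 < r -> exists n, radius n < r.
Proof.
  intros Hr. destruct (half_pow_small (r * 4 / eps)) as [n Hn];
    [apply Rdiv_lt_0_compat; lra|].
  exists n. unfold radius.
  apply Rmult_lt_compat_l with (r := eps / 4) in Hn; [|lra].
  replace (eps / 4 * (r * 4 / eps)) with r in Hn by (field; lra). exact Hn.
Qed.

Definition least_near (t z : X) : Prop :=
  d t z < eps /\ forall s, d s z < eps -> prec t s.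

Definition centre (covered : set X) (n : nat) (t z : X) : Prop :=
  least_near t z /\ (forall w, d z w < 3 * radius n -> d t w < eps) /\ ~ covered z.

Definition piece (n : nat) (covered : set X) (t : X) : set X :=
  fun y => exists z, centre covered n t z /\ d z y < radius n.

Fixpoint covered (n : nat) : set X :=
  match n with
  | 0 => fun _ => False
  | S n => fun y => covered n y \/ exists t, piece n (covered n) t y
  end.

Definition D (n : nat) (t : X) : set X := piece n (covered n) t.

Lemma covered_spec n y : covered n y <-> exists j t, (j < n)%nat /\ D j t y.
Proof.
  induction n; simpl.
  - split; [intros [] | intros [j [t [H _]]]; lia].
  - rewrite IHn. split.
    + intros [[j [t [H1 H2]]]|[t Ht]].
      * exists j, t. split; [lia | exact H2].
      * exists n, t. split; [lia | exact Ht].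
    + intros [j [t [H1 H2]]]. destruct (Nat.eq_dec j n).
      * subst. right. exists t. exact H2.
      * left. exists j, t. split; [lia | exact H2].
Qed.

Lemma D_open n t : metric_open X d (D n t).
Proof.
  intros y [z [Hc Hz]]. exists (radius n - d z y). split; [lra|].
  intros w Hw. exists z. split; [exact Hc|]. pose proof (dist_triangle z y w). lra.
Qed.

Lemma D_in_ball n t y : D n t y -> d t y < eps.
Proof.
  intros [z [[_ [Hsub _]] Hz]]. apply Hsub. pose proof (radius_pos n). lra.
Qed.

(* Every point lies in some [D n t]: either it is covered at the first level
   [n] with [3 r n] below its margin in its [eps]-ball, or it is a centre there. *)
Lemma D_cover x : exists n t, D n t x.
Proof.
  destruct (prec_least (fun s => d s x < eps)) as [s [Hs Hmin]];
    [exists x; rewrite dist_refl; exact Heps|].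
  destruct (radius_small ((eps - d s x) / 3)) as [n Hn]; [lra|].
  destruct (classic (covered n x)) as [Hc|Hc].
  - apply covered_spec in Hc. destruct Hc as [j [t [_ H]]]. eauto.
  - exists n, s, x. split.
    + split; [split; auto|]. split; [|exact Hc].
      intros w Hw. pose proof (dist_triangle s x w). lra.
    + rewrite dist_refl. apply radius_pos.
Qed.

Lemma D_separated i s t p q : D i s p -> D i t q -> d p q < radius i -> s = t.
Proof.
  intros [z [[[Hz1 Hz2] [Hz3 _]] Hzp]] [y [[[Hy1 Hy2] [Hy3 _]] Hyq]] Hpq.
  apply NNPP. intros Hne.
  assert (Hzy : 3 * radius i <= d z y).
  { apply Rnot_lt_le. intros Hlt. apply Hne. apply prec_antisym.
    - apply Hz2. apply Hy3. rewrite dist_sym. exact Hlt.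
    - apply Hy2. apply Hz3. exact Hlt. }
  pose proof (dist_triangle z p y). pose proof (dist_triangle p q y).
  rewrite (dist_sym q y) in H0. lra.
Qed.

(* Near any point, the levels from some [k] on are empty: a ball around [x]
   lies inside the covered set of some level, and later centres avoid it. *)
Lemma D_high_levels x : exists k, forall i t y, (k <= i)%nat -> D i t y ->
  ~ d x y < radius k.
Proof.
  destruct (D_cover x) as [n [s [z0 [Hc0 Hz0]]]].
  set (g := radius n - d z0 x).
  assert (Hball : forall w, d x w < g -> covered (S n) w).
  { intros w Hw. simpl. right. exists s, z0. split; [exact Hc0|].
    pose proof (dist_triangle z0 x w). unfold g in Hw. lra. }
  destruct (radius_small (g / 2)) as [k0 Hk0]; [unfold g; lra|].
  exists (S (max n k0)). intros i t y Hik [c [[_ [_ Hnc]] Hcy]] Hxy. apply Hnc.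
  assert (Hxc : d x c < g).
  { pose proof (dist_triangle x y c). rewrite (dist_sym y c) in H.
    pose proof (radius_antitone (S (max n k0)) i Hik).
    pose proof (radius_antitone k0 (S (max n k0)) ltac:(lia)). lra. }
  destruct (proj1 (covered_spec _ _) (Hball c Hxc)) as [j [t' [Hj Ht']]].
  apply covered_spec. exists j, t'. split; [lia | exact Ht'].
Qed.

Lemma D_locally_finite x : exists rho, 0 < rho /\ exists l : list (set X),
  forall n t, (exists y, D n t y /\ d x y < rho) -> In (D n t) l.
Proof.
  destruct (D_high_levels x) as [k Hk].
  exists (radius k). split; [apply radius_pos|].
  destruct (functional_choice (fun i t => (exists t' y, D i t' y /\ d x y < radius k) ->
      exists y, D i t y /\ d x y < radius k)) as [pick Hpick].
  { intros i. destruct (classic (exists t' y, D i t' y /\ d x y < radius k)) as [[t' H]|H].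
    - exists t'. auto.
    - exists x. intros H'. contradiction. }
  exists (map (fun i => D i (pick i)) (seq 0 k)).
  intros i t [y [Hy Hxy]].
  destruct (Nat.lt_ge_cases i k) as [Hik|Hik]; [|exfalso; apply (Hk i t y Hik Hy Hxy)].
  destruct (Hpick i (ex_intro _ t (ex_intro _ y (conj Hy Hxy)))) as [y' [Hy' Hxy']].
  assert (Hpicked : t = pick i).
  { apply D_separated with i y y'; auto.
    pose proof (dist_triangle y x y'). rewrite (dist_sym y x) in H.
    pose proof (radius_half i k Hik). lra. }
  rewrite Hpicked. apply (in_map (fun j => D j (pick j))). apply in_seq. lia.
Qed.

End Refinement.

Definition stone_base (W : set X) : Prop := exists m n t, W = D ((/2)^m) n t.

Lemma stone_base_locally_finite_below x M : exists rho, 0 < rho /\ exists l : list (set X),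
  forall m, (m < M)%nat -> forall n t,
    (exists y, D ((/2)^m) n t y /\ d x y < rho) -> In (D ((/2)^m) n t) l.
Proof.
  induction M as [|M IH]; [exists 1; split; [lra | exists nil; intros; lia]|].
  destruct IH as [r1 [Hr1 [l1 Hl1]]].
  destruct (D_locally_finite ((/2)^M) (half_pow_pos M) x) as [r2 [Hr2 [l2 Hl2]]].
  exists (Rmin r1 r2). split; [apply Rmin_pos; auto|]. exists (l1 ++ l2).
  intros m Hm n t [y [Hy Hxy]]. apply in_or_app.
  pose proof (Rmin_l r1 r2). pose proof (Rmin_r r1 r2).
  destruct (Nat.eq_dec m M).
  - subst. right. apply Hl2. exists y. split; [exact Hy | lra].
  - left. apply (Hl1 m); [lia|]. exists y. split; [exact Hy | lra].
Qed.

Lemma stone_base_is_base : is_base X T stone_base.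
Proof.
  split.
  - intros W [m [n [t ->]]]. apply HTd, D_open.
  - intros U x HU Ux. apply HTd in HU. destruct (HU x Ux) as [r [Hr Hball]].
    destruct (half_pow_small (r / 2)) as [m Hm]; [lra|].
    destruct (D_cover ((/2)^m) (half_pow_pos m) x) as [n [t Ht]].
    exists (D ((/2)^m) n t). split; [exists m, n, t; reflexivity|]. split; [exact Ht|].
    intros y Hy. apply Hball.
    pose proof (D_in_ball _ (half_pow_pos m) _ _ _ Ht).
    pose proof (D_in_ball _ (half_pow_pos m) _ _ _ Hy).
    pose proof (dist_triangle x t y). rewrite (dist_sym x t) in H1. lra.
Qed.

(* Regularity at [x ∈ B(x, r) ⊆ U]: with [2^-M < r/3], pieces at scales
   [m >= M] meeting [B(x, 2^-M)] lie in [B(x, r)], and the finitely many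
   scales [m < M] are handled by local finiteness. *)
Lemma stone_base_regular x : regular_at X T stone_base x.
Proof.
  intros U HU Ux. apply HTd in HU. destruct (HU x Ux) as [r [Hr Hball]].
  destruct (half_pow_small (r / 3)) as [M HM]; [lra|].
  destruct (stone_base_locally_finite_below x M) as [rho [Hrho [l Hl]]].
  pose proof (half_pow_pos M). pose proof (Rmin_l rho ((/2)^M)). pose proof (Rmin_r rho ((/2)^M)).
  exists (fun y => d x y < Rmin rho ((/2)^M)).
  split; [apply HTd, ball_open|].
  split; [rewrite dist_refl; apply Rmin_pos; auto|].
  split; [intros y Hy; apply Hball; lra|].
  exists l. intros W [[m [n [t ->]]] [[p [Wp Vp]] Hnot_sub]].
  destruct (Nat.lt_ge_cases m M) as [HmM|HmM].
  - apply (Hl m HmM). exists p. split; [exact Wp | lra].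
  - exfalso. apply Hnot_sub. intros y Hy. apply Hball.
    pose proof (D_in_ball _ (half_pow_pos m) _ _ _ Wp).
    pose proof (D_in_ball _ (half_pow_pos m) _ _ _ Hy).
    pose proof (half_pow_antitone M m HmM).
    pose proof (dist_triangle x p t). pose proof (dist_triangle x t y).
    rewrite (dist_sym p t) in H5. lra.
Qed.

Lemma metric_regular_base : regular_base_at_nonisolated X T stone_base.
Proof. split; [exact stone_base_is_base | intros x _; apply stone_base_regular]. Qed.

End MetricSpace.

Lemma perfect_regular_base_of_metrizable (X : Type) (T : set X -> Prop) :
  metrizable X T -> perfect X T /\ exists B, regular_base_at_nonisolated X T B.
Proof.
  intros [d [Hd HTd]]. destruct (WellOrdering.exists_well_ordering X) as [prec [Hanti Hleast]].
  split; [exact (metric_perfect X d Hd T HTd)|].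
  exists (stone_base X d prec). exact (metric_regular_base X d Hd T HTd prec Hanti Hleast).
Qed.

Theorem mainTheorem8 (X : Type) (T : set X -> Prop)
  (HT : is_topology X T) (HT1 : T1_space X T) :
  (metrizable X T <->
     (perfect X T /\ exists B, regular_base_at_nonisolated X T B)) /\
  (metrizable X T <->
     (perfect X T /\ exists Ws, strong_development_at_nonisolated X T Ws)).
Proof.
  pose proof (perfect_regular_base_of_metrizable X T) as H12.
  assert (H23 : (exists B, regular_base_at_nonisolated X T B) ->
                exists Ws, strong_development_at_nonisolated X T Ws).
  { intros [B HB]. exact (strong_development_of_regular_base X T HT HT1 B HB). }
  pose proof (metrizable_of_strong_development X T HT HT1) as H31.
  split; split.
  - exact H12.
  - intros [Hperf HB]. exact (H31 Hperf (H23 HB)).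
  - intros Hm. destruct (H12 Hm) as [Hperf HB]. exact (conj Hperf (H23 HB)).
  - intros [Hperf HWs]. exact (H31 Hperf HWs).
Qed.
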